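(* The super-differential of $\theta$ at the origin is $\partial^+\theta(0)=\overline{\{\nabla\theta(q^{-1/2},q^{1/2}):q\in(0,\infty)\}}+[0,\infty)^2$.
   Context: $\theta:[0,\infty)^2\to[0,\infty)$ is continuous, concave, 1-homogeneous, symmetric, $C^\infty$ on $(0,\infty)^2$, with $\theta(0,s)=\theta(s,0)=0$, $\theta(s,s)=s$, $\theta(s,t)>0$ for $s,t>0$, and nondecreasing in each argument; it is regarded as a concave function $\mathbb{R}^2\to\mathbb{R}\cup\{-\infty\}$ with $\theta(s,t)=-\infty$ if $\min\{s,t\}<0$. The super-differential is $\partial^+\theta(x)=\{r\in\mathbb{R}^2:\theta(y)\le\theta(x)+\langle r,y-x\rangle\ \forall y\in\mathbb{R}^2\}$ (i.e. $-\partial(-\theta)(x)$). The overline denotes closure in $\mathbb{R}^2$ and $+$ the Minkowski sum. *)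

From Stdlib Require Import Reals.
From Coquelicot Require Import Coquelicot.
Open Scope R_scope.

Definition quadrant (p : R * R) : Prop := 0 <= fst p /\ 0 <= snd p.

Definition theta_ext (theta : R -> R -> R) (p : R * R) : Rbar :=
  match Rlt_dec (fst p) 0, Rlt_dec (snd p) 0 with
  | right _, right _ => Finite (theta (fst p) (snd p))
  | _, _ => m_infty
  end.

Definition superdiff (theta : R -> R -> R) (x : R * R) (r : R * R) : Prop :=
  forall y : R * R,
    Rbar_le (theta_ext theta y)
      (Rbar_plus (theta_ext theta x)
         (Finite (fst r * (fst y - fst x) + snd r * (snd y - snd x)))).

Definition partial1 (f : R -> R -> R) : R -> R -> R :=
  fun s t => Derive (fun u => f u t) s.
Definition partial2 (f : R -> R -> R) : R -> R -> R :=
  fun s t => Derive (fun u => f s u) t.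

Fixpoint Ck_open_quadrant (k : nat) (f : R -> R -> R) : Prop :=
  match k with
  | O => forall s t, 0 < s -> 0 < t ->
           continuous (fun p : R * R => f (fst p) (snd p)) (s, t)
  | S k' => (forall s t, 0 < s -> 0 < t ->
               ex_derive (fun u => f u t) s /\ ex_derive (fun u => f s u) t)
            /\ Ck_open_quadrant k' f
            /\ Ck_open_quadrant k' (partial1 f)
            /\ Ck_open_quadrant k' (partial2 f)
  end.

Definition smooth_open_quadrant (f : R -> R -> R) : Prop :=
  forall k, Ck_open_quadrant k f.

Definition admissible_theta (theta : R -> R -> R) : Prop :=
  (forall p : R * R, quadrant p ->
     filterlim (fun q : R * R => theta (fst q) (snd q))
       (within quadrant (locally p)) (locally (theta (fst p) (snd p))))
  /\ (forall s1 t1 s2 t2 l, 0 <= s1 -> 0 <= t1 -> 0 <= s2 -> 0 <= t2 ->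
        0 <= l <= 1 ->
        l * theta s1 t1 + (1 - l) * theta s2 t2
          <= theta (l * s1 + (1 - l) * s2) (l * t1 + (1 - l) * t2))
  /\ (forall l s t, 0 <= l -> 0 <= s -> 0 <= t ->
        theta (l * s) (l * t) = l * theta s t)
  /\ (forall s t, 0 <= s -> 0 <= t -> theta s t = theta t s)
  /\ smooth_open_quadrant theta
  /\ (forall s, 0 <= s -> theta 0 s = 0 /\ theta s 0 = 0)
  /\ (forall s, 0 <= s -> theta s s = s)
  /\ (forall s t, 0 < s -> 0 < t -> 0 < theta s t)
  /\ (forall s s' t, 0 <= s -> s <= s' -> 0 <= t -> theta s t <= theta s' t)
  /\ (forall s t t', 0 <= s -> 0 <= t -> t <= t' -> theta s t <= theta s t').

Definition grad_curve (theta : R -> R -> R) (q : R) : R * R :=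
  (partial1 theta (/ sqrt q) (sqrt q), partial2 theta (/ sqrt q) (sqrt q)).

Definition grad_set (theta : R -> R -> R) (g : R * R) : Prop :=
  exists q, 0 < q /\ g = grad_curve theta q.

Definition closure2 (A : R * R -> Prop) (p : R * R) : Prop :=
  forall eps : posreal, exists a, A a /\ ball p eps a.

Definition plus_quadrant (A : R * R -> Prop) (r : R * R) : Prop :=
  exists a b, A a /\ quadrant b /\ r = (fst a + fst b, snd a + snd b).

From Stdlib Require Import Reals Lra Psatz Classical.
From Coquelicot Require Import Coquelicot.
Open Scope R_scope.

(* Write h x := theta 1 x.  By homogeneity, r lies in the super-differential
   at the origin iff the line x |-> r1 + r2 x majorizes the concave profile h
   on [0,oo), and the gradient of theta at (q^(-1/2), q^(1/2)) is the pair
   (intercept, slope) of the tangent to h at q.  Tangents majorize h, and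
   majorization survives closure and adding the quadrant.  Conversely, let a
   line of slope r2 majorize h.  If r2 = 0, h is bounded and the tangents at
   q -> oo converge to (sup h, 0).  If h' exceeds r2 > 0 somewhere, then, as h'
   is continuous and tends to 0 at infinity (h is sublinear since
   theta(0,1) = 0), some tangent has slope exactly r2 and lies below the line.
   Otherwise h' <= r2 and the tangents at q -> 0 converge to (0, sup h'). *)

Lemma ball_R2 (p a : R * R) e :
  ball p e a <-> Rabs (fst a - fst p) < e /\ Rabs (snd a - snd p) < e.
Proof. destruct p, a; reflexivity. Qed.

Lemma closure2_affine_le (A : R * R -> Prop) p c x : 0 <= x ->
  (forall a, A a -> c <= fst a + snd a * x) ->
  closure2 A p -> c <= fst p + snd p * x.
Proof.
  intros Hx HA Hp. apply Rle_plus_epsilon. intros eps Heps.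
  set (e := eps / (1 + x)).
  assert (He : 0 < e) by (apply Rdiv_lt_0_compat; lra).
  destruct (Hp (mkposreal e He)) as [a [Ha Hball]].
  destruct (proj1 (ball_R2 _ _ _) Hball) as [B1 B2]; cbn [pos] in B1, B2.
  apply Rabs_def2 in B1; apply Rabs_def2 in B2.
  assert (Hsplit : eps = e + e * x) by (unfold e; field; lra).
  assert (snd a * x <= (snd p + e) * x) by (apply Rmult_le_compat_r; lra).
  specialize (HA a Ha). lra.
Qed.

Lemma closure2_monotone (A B : R * R -> Prop) p :
  (forall a, A a -> B a) -> closure2 A p -> closure2 B p.
Proof. intros HAB Hp eps. destruct (Hp eps) as [a [Ha Hball]]. eauto. Qed.

Lemma plus_quadrant_closure2_ext (A B : R * R -> Prop) r :
  (forall p, A p <-> B p) ->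
  plus_quadrant (closure2 A) r <-> plus_quadrant (closure2 B) r.
Proof.
  intros HAB.
  split; intros [a [b [Ha Hb]]]; exists a, b; split; auto;
    revert Ha; apply closure2_monotone; apply HAB.
Qed.

Lemma is_lub_approx (E : R -> Prop) m eps :
  is_lub E m -> 0 < eps -> exists y, E y /\ m - eps < y.
Proof.
  intros [_ Hleast] Heps. apply NNPP. intros Hnone.
  enough (m <= m - eps) by lra.
  apply Hleast. intros y Hy. apply Rnot_lt_le. intros Hlt. eauto.
Qed.

Definition affine_majorant (h : R -> R) (r : R * R) : Prop :=
  forall x, 0 <= x -> h x <= fst r + snd r * x.

Lemma affine_majorant_slope_nonneg (h : R -> R) r :
  (forall x, 0 <= x -> 0 <= h x) -> affine_majorant h r -> 0 <= snd r.
Proof.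
  intros Hpos Hmaj. destruct r as [r1 r2]; simpl in *.
  apply Rnot_lt_le. intros Hr2.
  set (x := (Rabs r1 + 1) / - r2).
  assert (Hx : 0 <= x) by (apply Rdiv_le_0_compat; [pose proof (Rabs_pos r1)|]; lra).
  assert (Hr2x : r2 * x = - (Rabs r1 + 1)) by (unfold x; field; lra).
  pose proof (Hmaj x Hx) as Hbound; simpl in Hbound.
  pose proof (Hpos x Hx). pose proof (Rle_abs r1). lra.
Qed.

Lemma is_derive_nonneg_of_nonneg_right (k : R -> R) d :
  k 0 = 0 -> (forall l, 0 < l <= 1 -> 0 <= k l) -> is_derive k 0 d -> 0 <= d.
Proof.
  intros Hk0 Hkpos Hd. apply is_derive_Reals in Hd.
  apply Rnot_lt_le. intros Hneg.
  destruct (Hd (- d) ltac:(lra)) as [del Hdel].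
  pose proof (cond_pos del) as Hdel0.
  set (l := Rmin 1 (del / 2)).
  assert (Hl0 : 0 < l) by (apply Rmin_glb_lt; lra).
  assert (Hl1 : l <= 1) by apply Rmin_l.
  assert (Hldel : l <= del / 2) by apply Rmin_r.
  specialize (Hdel l ltac:(lra) ltac:(rewrite Rabs_pos_eq; lra)).
  rewrite Rplus_0_l, Hk0, Rminus_0_r in Hdel. apply Rabs_def2 in Hdel.
  assert (Hkl : k l = k l / l * l) by (field; lra).
  pose proof (Hkpos l ltac:(lra)). nra.
Qed.

Lemma concave_tangent_le (h : R -> R) q x :
  (forall x y l, 0 <= x -> 0 <= y -> 0 <= l <= 1 ->
     l * h x + (1 - l) * h y <= h (l * x + (1 - l) * y)) ->
  0 < q -> ex_derive h q -> 0 <= x ->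
  h x <= h q + Derive h q * (x - q).
Proof.
  intros Hconc Hq Hd Hx.
  set (k := fun l => h (q + l * (x - q)) - h q - l * (h x - h q)).
  enough (0 <= Derive h q * (x - q) - (h x - h q)) by lra.
  apply (is_derive_nonneg_of_nonneg_right k).
  - unfold k. rewrite Rmult_0_l, Rplus_0_r. ring.
  - intros l Hl. unfold k.
    pose proof (Hconc x q l Hx ltac:(lra) ltac:(lra)) as Hc.
    replace (l * x + (1 - l) * q) with (q + l * (x - q)) in Hc by ring. lra.
  - unfold k. auto_derive.
    + rewrite Rmult_0_l, Rplus_0_r. exact Hd.
    + rewrite Rmult_0_l, Rplus_0_r. change (Derive (fun y => h y) q) with (Derive h q). ring.
Qed.

Definition tangent_coef (h : R -> R) (q : R) : R * R :=
  (h q - q * Derive h q, Derive h q).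

Definition tangent_set (h : R -> R) (p : R * R) : Prop :=
  exists q, 0 < q /\ p = tangent_coef h q.

Section ConcaveProfile.

Variable h : R -> R.

Hypothesis h_concave : forall x y l, 0 <= x -> 0 <= y -> 0 <= l <= 1 ->
  l * h x + (1 - l) * h y <= h (l * x + (1 - l) * y).
Hypothesis h_derivable : forall x, 0 < x -> ex_derive h x.
Hypothesis h_Derive_continuous : forall x, 0 < x -> continuous (Derive h) x.
Hypothesis h_0 : h 0 = 0.
Hypothesis h_nondecreasing : forall x y, 0 <= x -> x <= y -> h x <= h y.
Hypothesis h_right_continuous_0 : forall eps, 0 < eps ->
  exists del, 0 < del /\ forall x, 0 <= x < del -> h x < eps.
Hypothesis h_sublinear : forall eps, 0 < eps ->
  exists X, forall x, X <= x -> h x < eps * x.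

Lemma tangent_le q x : 0 < q -> 0 <= x -> h x <= h q + Derive h q * (x - q).
Proof. intros Hq Hx. apply concave_tangent_le; auto. Qed.

Lemma nondecreasing_nonneg x : 0 <= x -> 0 <= h x.
Proof. intros Hx. rewrite <- h_0. apply h_nondecreasing; lra. Qed.

Lemma Derive_nonneg q : 0 < q -> 0 <= Derive h q.
Proof.
  intros Hq. pose proof (tangent_le q (q + 1) Hq ltac:(lra)) as Htan.
  pose proof (h_nondecreasing q (q + 1) ltac:(lra) ltac:(lra)).
  replace (q + 1 - q) with 1 in Htan by ring. lra.
Qed.

Lemma Derive_nonincreasing p q : 0 < p -> p <= q -> Derive h q <= Derive h p.
Proof.
  intros Hp Hpq. destruct (Req_dec p q) as [<- | Hne]; [lra |].
  pose proof (tangent_le p q Hp ltac:(lra)).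
  pose proof (tangent_le q p ltac:(lra) ltac:(lra)).
  apply Rnot_lt_le. intros Hlt. nra.
Qed.

Lemma tangent_intercept_nonneg q : 0 < q -> 0 <= h q - q * Derive h q.
Proof.
  intros Hq. pose proof (tangent_le q 0 Hq (Rle_refl 0)). rewrite h_0 in *. lra.
Qed.

Lemma affine_majorant_tangent q : 0 < q -> affine_majorant h (tangent_coef h q).
Proof. intros Hq x Hx. simpl. pose proof (tangent_le q x Hq Hx). lra. Qed.

Lemma affine_majorant_of_closure r :
  plus_quadrant (closure2 (tangent_set h)) r -> affine_majorant h r.
Proof.
  intros [a [b [Ha [[Hb1 Hb2] ->]]]] x Hx. simpl.
  assert (h x <= fst a + snd a * x).
  { apply (closure2_affine_le (tangent_set h)); auto.
    intros c [q [Hq ->]]. apply affine_majorant_tangent; auto. }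
  nra.
Qed.

Lemma closure_tangent_set_lub_values M :
  is_lub (fun y => exists x, 0 <= x /\ y = h x) M -> closure2 (tangent_set h) (M, 0).
Proof.
  intros HM eps. pose proof (cond_pos eps) as Heps.
  destruct (is_lub_approx _ _ (eps / 4) HM ltac:(lra)) as [y [[x0 [Hx0 ->]] Hhx0]].
  (* With q / 2 >= max x0 1, the chord of h over [q / 2, q] bounds the slope
     at q by the oscillation of h beyond x0. *)
  set (q := 2 * (x0 + 1)).
  assert (Hq : 0 < q) by (unfold q; lra).
  exists (tangent_coef h q). split; [exists q; auto |].
  apply ball_R2; simpl.
  assert (Hup : h q <= M) by (apply (proj1 HM); exists q; split; [lra | auto]).
  pose proof (tangent_le q (q / 2) Hq ltac:(lra)) as Hmid.
  replace (q / 2 - q) with (- (q / 2)) in Hmid by field.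
  pose proof (h_nondecreasing x0 (q / 2) Hx0 ltac:(unfold q; lra)).
  pose proof (Derive_nonneg q Hq).
  assert (Hslope : Derive h q * (q / 2) < eps / 4) by lra.
  assert (Derive h q <= Derive h q * (q / 2)) by (unfold q in *; nra).
  split; apply Rabs_def1; lra.
Qed.

Lemma closure_tangent_set_lub_Derive G :
  is_lub (fun y => exists q, 0 < q /\ y = Derive h q) G ->
  closure2 (tangent_set h) (0, G).
Proof.
  intros HG eps. pose proof (cond_pos eps) as Heps.
  destruct (is_lub_approx _ _ eps HG Heps) as [y [[q0 [Hq0 ->]] Hgq0]].
  destruct (h_right_continuous_0 eps Heps) as [del [Hdel Hsmall]].
  set (q := Rmin q0 (del / 2)).
  assert (Hq : 0 < q) by (apply Rmin_glb_lt; lra).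
  assert (Hqq0 : q <= q0) by apply Rmin_l.
  assert (Hqdel : q <= del / 2) by apply Rmin_r.
  exists (tangent_coef h q). split; [exists q; auto |].
  apply ball_R2; simpl.
  assert (Hup : Derive h q <= G) by (apply (proj1 HG); exists q; auto).
  pose proof (Hsmall q ltac:(lra)).
  pose proof (tangent_intercept_nonneg q Hq).
  pose proof (Derive_nonneg q Hq).
  pose proof (Derive_nonincreasing q q0 Hq Hqq0).
  assert (0 <= q * Derive h q) by nra.
  split; apply Rabs_def1; lra.
Qed.

Lemma Derive_attains y q0 : 0 < y -> 0 < q0 -> y < Derive h q0 ->
  exists z, 0 < z /\ Derive h z = y.
Proof.
  intros Hy Hq0 Hlt.
  destruct (h_sublinear y Hy) as [X HX].
  set (q1 := Rmax X q0 + 1).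
  assert (HXq1 : X <= q1) by (pose proof (Rmax_l X q0); unfold q1; lra).
  assert (Hq0q1 : q0 < q1) by (pose proof (Rmax_r X q0); unfold q1; lra).
  assert (Hq1 : Derive h q1 < y).
  { pose proof (HX q1 HXq1). pose proof (tangent_intercept_nonneg q1 ltac:(lra)). nra. }
  destruct (Ranalysis5.IVT_interv (fun x => y - Derive h x) q0 q1) as [z [Hz Hgz]];
    try lra.
  intros a Ha. apply continuity_pt_minus.
  - apply continuity_pt_const. intros u v. reflexivity.
  - apply continuity_pt_filterlim, h_Derive_continuous. lra.
  exists z. split; lra.
Qed.

Lemma plus_quadrant_closure_of_affine_majorant r :
  affine_majorant h r -> plus_quadrant (closure2 (tangent_set h)) r.
Proof.
  intros Hmaj.
  pose proof (affine_majorant_slope_nonneg h r nondecreasing_nonneg Hmaj) as Hr2.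
  destruct r as [r1 r2]; unfold affine_majorant in Hmaj; simpl in Hmaj, Hr2.
  assert (Hr1 : 0 <= r1) by (pose proof (Hmaj 0 (Rle_refl 0)); rewrite h_0 in *; lra).
  destruct (Req_dec r2 0) as [-> | Hr2pos].
  - destruct (completeness (fun y => exists x, 0 <= x /\ y = h x)) as [M HM].
    { exists r1. intros y [x [Hx ->]]. pose proof (Hmaj x Hx). lra. }
    { exists (h 0), 0. split; [lra | auto]. }
    assert (HMr1 : M <= r1).
    { apply (proj2 HM). intros y [x [Hx ->]]. pose proof (Hmaj x Hx). lra. }
    exists (M, 0), (r1 - M, 0). split; [| split; [split |]]; simpl.
    + apply closure_tangent_set_lub_values; auto.
    + lra.
    + lra.
    + f_equal; ring.
  - destruct (classic (exists q0, 0 < q0 /\ r2 < Derive h q0)) as [[q0 [Hq0 Hlt]] | Hnone].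
    + destruct (Derive_attains r2 q0 ltac:(lra) Hq0 Hlt) as [z [Hz Hgz]].
      exists (tangent_coef h z), (r1 - (h z - z * r2), 0).
      split; [| split; [split |]]; simpl.
      * intros eps. exists (tangent_coef h z). split; [exists z; auto | apply ball_center].
      * pose proof (Hmaj z ltac:(lra)). lra.
      * lra.
      * rewrite Hgz. f_equal; ring.
    + assert (Hbound : forall q, 0 < q -> Derive h q <= r2).
      { intros q Hq. apply Rnot_lt_le. intros Hlt. eauto. }
      destruct (completeness (fun y => exists q, 0 < q /\ y = Derive h q)) as [G HG].
      { exists r2. intros y [q [Hq ->]]. auto. }
      { exists (Derive h 1), 1. split; [lra | auto]. }
      assert (HGr2 : G <= r2) by (apply (proj2 HG); intros y [q [Hq ->]]; auto).
      exists (0, G), (r1, r2 - G). split; [| split; [split |]]; simpl.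
      * apply closure_tangent_set_lub_Derive; auto.
      * lra.
      * lra.
      * f_equal; ring.
Qed.

Theorem affine_majorant_iff r :
  affine_majorant h r <-> plus_quadrant (closure2 (tangent_set h)) r.
Proof.
  split; [apply plus_quadrant_closure_of_affine_majorant | apply affine_majorant_of_closure].
Qed.

End ConcaveProfile.

Lemma superdiff_origin_iff (theta : R -> R -> R) r : theta 0 0 = 0 ->
  superdiff theta (0, 0) r <->
  forall s t, 0 <= s -> 0 <= t -> theta s t <= fst r * s + snd r * t.
Proof.
  intros H00. unfold superdiff, theta_ext; simpl.
  destruct (Rlt_dec 0 0) as [Hlt | _]; [lra |]. rewrite H00.
  split.
  - intros Hsup s t Hs Ht. specialize (Hsup (s, t)); simpl in Hsup.
    destruct (Rlt_dec s 0); [lra |]. destruct (Rlt_dec t 0); [lra |].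
    simpl in Hsup. lra.
  - intros Hle [s t]; simpl.
    destruct (Rlt_dec s 0); [exact I |]. destruct (Rlt_dec t 0); [exact I |].
    simpl. specialize (Hle s t ltac:(lra) ltac:(lra)). lra.
Qed.

Section Homogeneous.

Variable theta : R -> R -> R.

Hypothesis theta_homogeneous : forall l s t, 0 <= l -> 0 <= s -> 0 <= t ->
  theta (l * s) (l * t) = l * theta s t.

Lemma theta_dehomogenize s t : 0 < s -> 0 <= t -> theta s t = s * theta 1 (t / s).
Proof.
  intros Hs Ht. rewrite <- theta_homogeneous by (try apply Rdiv_le_0_compat; lra).
  f_equal; field; lra.
Qed.

Lemma homogeneous_majorant_iff r :
  (forall t, 0 <= t -> theta 0 t = 0) -> (forall x, 0 <= x -> 0 <= theta 1 x) ->
  (forall s t, 0 <= s -> 0 <= t -> theta s t <= fst r * s + snd r * t) <->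
  affine_majorant (theta 1) r.
Proof.
  intros Hzero Hpos. split.
  - intros Hle x Hx. specialize (Hle 1 x ltac:(lra) Hx). lra.
  - intros Hmaj s t Hs Ht.
    pose proof (affine_majorant_slope_nonneg _ _ Hpos Hmaj) as Hr2.
    destruct (Req_dec s 0) as [-> | Hs0].
    + rewrite Hzero by exact Ht. nra.
    + rewrite theta_dehomogenize by lra.
      assert (Ht' : 0 <= t / s) by (apply Rdiv_le_0_compat; lra).
      pose proof (Rmult_le_compat_l s _ _ ltac:(lra) (Hmaj (t / s) Ht')) as Hscaled.
      replace (s * (fst r + snd r * (t / s))) with (fst r * s + snd r * t) in Hscaled
        by (field; lra).
      exact Hscaled.
Qed.

Hypothesis theta1_derivable : forall x, 0 < x -> ex_derive (theta 1) x.

Lemma partial1_dehomogenize s t : 0 < s -> 0 < t ->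
  partial1 theta s t = theta 1 (t / s) - t / s * Derive (theta 1) (t / s).
Proof.
  intros Hs Ht. unfold partial1.
  rewrite (Derive_ext_loc _ (fun u => u * theta 1 (t / u))).
  2:{ apply (filter_imp (fun u => 0 < u)); [| exact (open_gt 0 s Hs)].
      intros u Hu. apply theta_dehomogenize; lra. }
  apply is_derive_unique. auto_derive.
  - split; [apply theta1_derivable; apply Rdiv_lt_0_compat; lra | split; [lra | exact I]].
  - change (Derive (fun x => theta 1 x)) with (Derive (theta 1)). unfold Rdiv. field; lra.
Qed.

Lemma partial2_dehomogenize s t : 0 < s -> 0 < t ->
  partial2 theta s t = Derive (theta 1) (t / s).
Proof.
  intros Hs Ht. unfold partial2.
  rewrite (Derive_ext_loc _ (fun u => s * theta 1 (u / s))).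
  2:{ apply (filter_imp (fun u => 0 < u)); [| exact (open_gt 0 t Ht)].
      intros u Hu. apply theta_dehomogenize; lra. }
  apply is_derive_unique. auto_derive.
  - apply theta1_derivable; apply Rdiv_lt_0_compat; lra.
  - change (Derive (fun x => theta 1 x)) with (Derive (theta 1)). unfold Rdiv. field; lra.
Qed.

Lemma grad_curve_tangent_coef q : 0 < q -> grad_curve theta q = tangent_coef (theta 1) q.
Proof.
  intros Hq.
  assert (Hsqrt : 0 < sqrt q) by (apply sqrt_lt_R0; lra).
  assert (Hratio : sqrt q / / sqrt q = q)
    by (rewrite <- (sqrt_sqrt q) at 3 by lra; field; lra).
  unfold grad_curve, tangent_coef.
  rewrite partial1_dehomogenize, partial2_dehomogenize, Hratio
    by (try apply Rinv_0_lt_compat; lra).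
  reflexivity.
Qed.

Lemma grad_set_tangent_set p : grad_set theta p <-> tangent_set (theta 1) p.
Proof.
  split; intros [q [Hq ->]]; exists q; split; auto;
    now rewrite grad_curve_tangent_coef.
Qed.

End Homogeneous.

Lemma profile_right_continuous_0 (theta : R -> R -> R) :
  filterlim (fun p : R * R => theta (fst p) (snd p))
    (within quadrant (locally (1, 0))) (locally (theta 1 0)) ->
  theta 1 0 = 0 ->
  forall eps, 0 < eps -> exists del, 0 < del /\ forall x, 0 <= x < del -> theta 1 x < eps.
Proof.
  intros Hcont H10 eps Heps.
  destruct (Hcont _ (locally_ball _ (mkposreal eps Heps))) as [del Hdel].
  exists del. split; [apply cond_pos |].
  intros x Hx. specialize (Hdel (1, x)); simpl in Hdel.
  assert (Hball : ball (1, 0) del (1, x)).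
  { apply ball_R2; simpl. rewrite Rminus_diag, Rminus_0_r, Rabs_R0, Rabs_pos_eq by lra.
    pose proof (cond_pos del). lra. }
  specialize (Hdel Hball ltac:(split; simpl; lra)).
  rewrite H10 in Hdel.
  destruct (Rabs_def2 (theta 1 x - 0) eps Hdel). lra.
Qed.

Lemma profile_sublinear (theta : R -> R -> R) :
  (forall l s t, 0 <= l -> 0 <= s -> 0 <= t -> theta (l * s) (l * t) = l * theta s t) ->
  (forall s t, 0 <= s -> 0 <= t -> theta s t = theta t s) ->
  (forall eps, 0 < eps -> exists del, 0 < del /\ forall x, 0 <= x < del -> theta 1 x < eps) ->
  forall eps, 0 < eps -> exists X, forall x, X <= x -> theta 1 x < eps * x.
Proof.
  intros Hhom Hsym Hc0 eps Heps.
  destruct (Hc0 eps Heps) as [del [Hdel Hsmall]].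
  exists (2 / del). intros x Hx.
  assert (H2del : 0 < 2 / del) by (apply Rdiv_lt_0_compat; lra).
  assert (Hxdel : 2 <= x * del).
  { replace 2 with (2 / del * del) by (field; lra). apply Rmult_le_compat_r; lra. }
  assert (Hinv0 : 0 < 1 / x) by (apply Rdiv_lt_0_compat; lra).
  assert (Hinv : 1 / x < del).
  { apply (Rmult_lt_reg_r x); [lra |]. replace (1 / x * x) with 1 by (field; lra). lra. }
  rewrite Hsym, (theta_dehomogenize theta Hhom x 1) by lra.
  pose proof (Hsmall (1 / x) ltac:(lra)). nra.
Qed.

Lemma profile_derivable (theta : R -> R -> R) :
  smooth_open_quadrant theta -> forall x, 0 < x -> ex_derive (theta 1) x.
Proof. intros Hsmooth x Hx. apply (proj1 (Hsmooth 1%nat) 1 x); lra. Qed.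

Lemma profile_Derive_continuous (theta : R -> R -> R) :
  smooth_open_quadrant theta -> forall x, 0 < x -> continuous (Derive (theta 1)) x.
Proof.
  intros Hsmooth x Hx.
  destruct (Hsmooth 1%nat) as [_ [_ [_ Hpartial2]]].
  apply (continuous_comp_2 (fun _ : R => 1) (fun u : R => u) (partial2 theta) x).
  - apply continuous_const.
  - apply continuous_id.
  - apply (Hpartial2 1 x); lra.
Qed.

Theorem lemma4p6 (theta : R -> R -> R) :
  admissible_theta theta ->
  forall r : R * R,
    superdiff theta (0, 0) r <-> plus_quadrant (closure2 (grad_set theta)) r.
Proof.
  intros [Hcont [Hconc [Hhom [Hsym [Hsmooth [Hzero [_ [_ [_ Hmono]]]]]]]]] r.
  assert (H00 : theta 0 0 = 0) by (apply Hzero; lra).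
  assert (H10 : theta 1 0 = 0) by (apply Hzero; lra).
  assert (Hzero_left : forall t, 0 <= t -> theta 0 t = 0) by (intros; apply Hzero; lra).
  assert (Hmono1 : forall x y, 0 <= x -> x <= y -> theta 1 x <= theta 1 y)
    by (intros; apply Hmono; lra).
  assert (Hconc1 : forall x y l, 0 <= x -> 0 <= y -> 0 <= l <= 1 ->
            l * theta 1 x + (1 - l) * theta 1 y <= theta 1 (l * x + (1 - l) * y)).
  { intros x y l Hx Hy Hl. pose proof (Hconc 1 x 1 y l ltac:(lra) Hx ltac:(lra) Hy Hl) as Hc.
    replace (l * 1 + (1 - l) * 1) with 1 in Hc by ring. exact Hc. }
  assert (Hc0 := profile_right_continuous_0 theta
                   (Hcont (1, 0) ltac:(split; simpl; lra)) H10).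
  rewrite (superdiff_origin_iff theta r H00),
    (homogeneous_majorant_iff theta Hhom r Hzero_left
       (nondecreasing_nonneg (theta 1) H10 Hmono1)),
    (plus_quadrant_closure2_ext _ _ r
       (grad_set_tangent_set theta Hhom (profile_derivable theta Hsmooth))).
  exact (affine_majorant_iff (theta 1) Hconc1 (profile_derivable theta Hsmooth)
           (profile_Derive_continuous theta Hsmooth) H10 Hmono1 Hc0
           (profile_sublinear theta Hhom Hsym Hc0) r).
Qed.
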